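(* Let $G$ be a finite group of nilpotence class $n\leq 2$, and let $S$ be a commutative semiring without non-zero zero-divisors and without zero sums. Then the group semiring $SG$ is centrally essential.
   Context: A semiring is a set $S$ with two binary operations $+$ and $\cdot$ such that $(S,+)$ is a commutative monoid with neutral element $0$, $(S,\cdot)$ is a monoid with identity $1$, multiplication distributes over addition on both sides, and $0s=s0=0$ for all $s\in S$. $S$ has no zero sums if $a+b=0$ implies $a=b=0$. The group semiring $SG$ consists of formal sums $\sum_{g\in G} s_g g$ with $s_g\in S$, with componentwise addition and multiplication $(\sum s_g g)(\sum t_h h)=\sum_{k}\big(\sum_{gh=k} s_g t_h\big)k$. The center of a semiring $R$ is $C(R)=\{r: rr'=r'r\ \forall r'\in R\}$; $R$ is centrally essential if for every non-zero $x\in R$ there exist non-zero $y,z\in C(R)$ with $xy=z$. The upper central series of $G$ is $\{e\}=C_0(G)\subseteq C_1(G)\subseteq\cdots$ where $C_i(G)/C_{i-1}(G)$ is the center of $G/C_{i-1}(G)$; the nilpotence class of $G$ is the least positive integer $n$ with $C_n(G)=G$. *)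

From HB Require Import structures.
From mathcomp Require Import all_boot all_algebra all_fingroup all_solvable.
Set Implicit Arguments. Unset Strict Implicit. Unset Printing Implicit Defensive.
Import GRing.Theory.
Local Open Scope ring_scope.

(* The group semiring S G, for a finite group G given as the whole of the
   finGroupType gT: elements are formal sums \sum_g s_g g, i.e. finite
   functions gT -> S; addition is componentwise. *)
Definition gsr (S : pzSemiRingType) (gT : finGroupType) := {ffun gT -> S}.

Definition gsr_zero (S : pzSemiRingType) (gT : finGroupType) : gsr S gT :=
  [ffun _ => 0].

Definition gsr_mul (S : pzSemiRingType) (gT : finGroupType)
  (x y : gsr S gT) : gsr S gT :=
  [ffun k => \sum_(g : gT) \sum_(h : gT | (g * h)%g == k) x g * y h].

Definition gsr_central (S : pzSemiRingType) (gT : finGroupType)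
  (r : gsr S gT) : Prop :=
  forall r' : gsr S gT, gsr_mul r r' = gsr_mul r' r.

Definition gsr_centrally_essential (S : pzSemiRingType) (gT : finGroupType)
  : Prop :=
  forall x : gsr S gT, x <> gsr_zero S gT ->
    exists y z : gsr S gT,
      [/\ y <> gsr_zero S gT, z <> gsr_zero S gT,
          gsr_central y, gsr_central z & gsr_mul x y = z].

Definition no_zero_divisors (S : pzSemiRingType) : Prop :=
  forall a b : S, a * b = 0 -> a = 0 \/ b = 0.

Definition no_zero_sums (S : pzSemiRingType) : Prop :=
  forall a b : S, a + b = 0 -> a = 0 /\ b = 0.

(* The element [\sum_g g] of [S G] is central for every finite group [G], and
   [x * \sum_g g = eps(x) \sum_g g] where [eps(x) = \sum_g s_g] is the
   augmentation of [x = \sum_g s_g g]. Without zero sums, [eps(x) <> 0] as soon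
   as [x <> 0], so [y = \sum_g g] and [z = eps(x) \sum_g g] witness central
   essentiality. *)
From mathcomp Require Import all_boot all_algebra all_fingroup all_solvable.
Set Implicit Arguments. Unset Strict Implicit. Unset Printing Implicit Defensive.
Import GRing.Theory.
Local Open Scope ring_scope.

Lemma no_zero_sums_sum_eq0 (S : pzSemiRingType) (I : finType) (F : I -> S) :
  no_zero_sums S -> \sum_i F i = 0 -> forall i, F i = 0.
Proof. by move=> nzs + i; rewrite (bigD1 i) //= => /nzs[]. Qed.

Section ConstantElements.
Variables (gT : finGroupType) (S : comPzSemiRingType).

Definition gsr_const (c : S) : gsr S gT := [ffun _ => c].

Definition gsr_aug (x : gsr S gT) : S := \sum_g x g.

Lemma gsr_const_eq0 (c : S) : gsr_const c = gsr_zero S gT <-> c = 0.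
Proof.
split=> [/ffunP /(_ 1%g)|->]; first by rewrite !ffunE.
by apply/ffunP => g; rewrite !ffunE.
Qed.

Lemma gsr_aug_eq0 (x : gsr S gT) :
  no_zero_sums S -> gsr_aug x = 0 -> x = gsr_zero S gT.
Proof.
move=> nzs /(no_zero_sums_sum_eq0 nzs) x0.
by apply/ffunP => g; rewrite ffunE x0.
Qed.

Lemma gsr_mul_constl (c : S) (x : gsr S gT) :
  gsr_mul (gsr_const c) x = gsr_const (c * gsr_aug x).
Proof.
apply/ffunP => k; rewrite !ffunE mulr_sumr.
under eq_bigr => g _ do rewrite big_mkcond /=.
rewrite exchange_big /=; apply: eq_bigr => h _.
rewrite -big_mkcond /= (big_pred1 (k * h^-1)%g) ?ffunE // => g /=.
by apply/eqP/eqP => [<-|->]; [rewrite mulgK | rewrite mulgKV].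
Qed.

Lemma gsr_mul_constr (c : S) (x : gsr S gT) :
  gsr_mul x (gsr_const c) = gsr_const (gsr_aug x * c).
Proof.
apply/ffunP => k; rewrite !ffunE mulr_suml; apply: eq_bigr => g _.
rewrite (big_pred1 (g^-1 * k)%g) ?ffunE // => h /=.
by apply/eqP/eqP => [<-|->]; [rewrite mulKg | rewrite mulKVg].
Qed.

Lemma gsr_const_central (c : S) : gsr_central (gsr_const c).
Proof. by move=> x; rewrite gsr_mul_constl gsr_mul_constr mulrC. Qed.

End ConstantElements.

Theorem proposition3p1 (gT : finGroupType) (S : comPzSemiRingType) :
  nilpotent [set: gT] -> (nil_class [set: gT] <= 2)%N ->
  no_zero_divisors S -> no_zero_sums S ->
  gsr_centrally_essential S gT.
Proof.
move=> _ _ _ nzs x x_neq0.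
have aug_neq0 : gsr_aug x <> 0 by move/(gsr_aug_eq0 nzs).
exists (gsr_const gT 1), (gsr_const gT (gsr_aug x)); split.
- by move/gsr_const_eq0 => one0; apply: aug_neq0; rewrite -[LHS]mulr1 one0 mulr0.
- by move/gsr_const_eq0.
- exact: gsr_const_central.
- exact: gsr_const_central.
- by rewrite gsr_mul_constr mulr1.
Qed.
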